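(* Let $I,J$ be positive integers, let $a_1,\ldots,a_J\in[0,\infty)^I$ be nonzero vectors, and consider the statistical model in which, for a parameter $\theta=(\theta_1,\ldots,\theta_I)\in(0,\infty)^I$, the observed counts $n_1,\ldots,n_J$ are independent with $n_j\sim\mathrm{Poisson}(\theta\cdot a_j)$, with joint probability mass function $$f_\theta(n_1,\ldots,n_J)=\prod_{j=1}^J\frac{(\theta\cdot a_j)^{n_j}e^{-\theta\cdot a_j}}{n_j!}.$$ Let $\mathcal{C}=\{C_1,\ldots,C_K\}$ be the maximal collapsing of $s_1,\ldots,s_J$ and let $T(n_1,\ldots,n_J)=(n_{C_1},\ldots,n_{C_K})$ with $n_{C_k}=\sum_{s_j\in C_k}n_j$. Then $T$ is a minimal sufficient statistic for $\theta$; that is, for any two count vectors $x,y\in\mathbb{Z}_{\ge0}^J$, the ratio $f_\theta(x)/f_\theta(y)$ does not depend on $\theta$ if and only if $T(x)=T(y)$.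
   Context: Read type $s_j$ has sampling rate vector $a_j=(a_{1,j},\ldots,a_{I,j})$ and $\theta\cdot a_j=\sum_i\theta_i a_{i,j}$. A collapsing of $s_1,\ldots,s_J$ is a partition $\{C_1,\ldots,C_K\}$ of $\{s_1,\ldots,s_J\}$ into nonempty disjoint categories such that whenever $s_{j_1},s_{j_2}$ lie in the same category, $a_{j_1}=c\,a_{j_2}$ for some real $c>0$; it is maximal if moreover, for reads $s_{j_1}\in C_{k_1}$, $s_{j_2}\in C_{k_2}$ with $k_1\ne k_2$, there is no real $c>0$ with $a_{j_1}=c\,a_{j_2}$. (Equivalently, the maximal collapsing groups reads exactly according to equality of the normalized vectors $a_j/\|a_j\|$.) *)

From HB Require Import structures.
From mathcomp Require Import all_boot all_order all_algebra.
From mathcomp Require Import reals.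
From mathcomp Require Import sequences exp.
Set Implicit Arguments. Unset Strict Implicit. Unset Printing Implicit Defensive.
Import Order.TTheory GRing.Theory Num.Theory.
Local Open Scope ring_scope.

Definition dotp (R : realType) (I : nat) (th v : 'I_I -> R) : R :=
  \sum_(i < I) th i * v i.

Definition pmf (R : realType) (I J : nat) (a : 'I_J -> 'I_I -> R)
    (th : 'I_I -> R) (n : 'I_J -> nat) : R :=
  \prod_(j < J)
    ((dotp th (a j)) ^+ n j * expR (- dotp th (a j)) / ((n j)`!)%:R).

Definition pos_multiple (R : realType) (I : nat) (u v : 'I_I -> R) : Prop :=
  exists c : R, 0 < c /\ u = (fun i => c * v i).

Definition collapsing (R : realType) (I J : nat) (a : 'I_J -> 'I_I -> R)
    (P : {set {set 'I_J}}) : Prop :=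
  partition P [set: 'I_J] /\
  (forall B, B \in P -> forall j1 j2, j1 \in B -> j2 \in B ->
     pos_multiple (a j1) (a j2)).

Definition maximal_collapsing (R : realType) (I J : nat)
    (a : 'I_J -> 'I_I -> R) (P : {set {set 'I_J}}) : Prop :=
  collapsing a P /\
  (forall B1 B2, B1 \in P -> B2 \in P -> B1 != B2 ->
     forall j1 j2, j1 \in B1 -> j2 \in B2 -> ~ pos_multiple (a j1) (a j2)).

Definition collapsed_count (J : nat) (n : 'I_J -> nat) (B : {set 'I_J}) : nat :=
  \sum_(j in B) n j.

From HB Require Import structures.
From mathcomp Require Import all_boot all_order all_algebra.
From mathcomp Require Import reals.
From mathcomp Require Import sequences exp.
From mathcomp Require Import ring.
From Stdlib Require Import FunctionalExtensionality.
Import Order.TTheory GRing.Theory Num.Theory.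
Local Open Scope ring_scope.
Set Implicit Arguments. Unset Strict Implicit. Unset Printing Implicit Defensive.

(* The exponential factors and factorials cancel in f_theta(x) / f_theta(y),
   so this ratio is free of theta iff prod_j (theta.a_j)^(x_j - y_j) is.
   Inside a category all theta.a_j are positive multiples of one linear form,
   so that quotient only sees the collapsed counts.  Conversely, restrict theta
   to the ray t.1 + q: each theta.a_j becomes a linear polynomial in t whose
   root only depends on the direction of a_j, and for generic q >= 0
   (q_i = z^i, with z avoiding the roots of finitely many nonzero polynomials)
   different categories give different roots.  Invariance of the ratio is then
   a polynomial identity in t, and the multiplicity of the root of a category C
   on both sides is n_C(x), resp. n_C(y). *)

Lemma exists_posnat_nonroot (R : numDomainType) (p : {poly R}) :
  p != 0 -> exists n : nat, ~~ root p n.+1%:R.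
Proof.
move=> p_neq0; pose s : seq R := [seq n.+1%:R | n <- iota 0 (size p)].
have s_uniq : uniq s.
  by rewrite map_inj_uniq ?iota_uniq // => m n /eqP; rewrite eqr_nat => /eqP [].
have [roots | /allPn [_ /mapP [n _ ->] n_nonroot]] := boolP (all (root p) s).
  have := max_poly_roots p_neq0 roots s_uniq.
  by rewrite size_map size_iota ltnn.
by exists n.
Qed.

Lemma poly_eq_on_posnat (R : numDomainType) (p q : {poly R}) :
  (forall n : nat, p.[n.+1%:R] = q.[n.+1%:R]) -> p = q.
Proof.
move=> pq; apply/eqP; rewrite -subr_eq0; apply/negPn/negP.
by move=> /exists_posnat_nonroot [n]; rewrite /root hornerD hornerN pq subrr eqxx.
Qed.

Lemma mup_prod_XsubCX (F : fieldType) (T : Type) (s : seq T) (r : T -> F)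
    (n : T -> nat) (x : F) :
  mup x (\prod_(j <- s) ('X - (r j)%:P) ^+ n j) =
  (\sum_(j <- s) if r j == x then n j else 0)%N.
Proof.
elim: s => [|j s IHs]; first by rewrite !big_nil mupNroot // root1.
rewrite !big_cons mupM ?IHs ?mup_XsubCX ?expf_neq0 ?polyXsubC_eq0 //.
rewrite prodf_seq_neq0; apply: sub_all (all_predT s) => k _ /=.
by rewrite expf_neq0 // polyXsubC_eq0.
Qed.

Definition vsum (R : realType) (I : nat) (v : 'I_I -> R) : R := dotp (fun=> 1) v.

Lemma dotpZ (R : realType) (I : nat) (th v : 'I_I -> R) (c : R) :
  dotp th (fun i => c * v i) = c * dotp th v.
Proof. by rewrite /dotp mulr_sumr; apply: eq_bigr => i _; rewrite mulrCA. Qed.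

Lemma dotp_lincomb (R : realType) (I : nat) (th u v : 'I_I -> R) (c d : R) :
  dotp th (fun i => c * u i - d * v i) = c * dotp th u - d * dotp th v.
Proof.
by rewrite -!dotpZ /dotp -sumrB; apply: eq_bigr => i _; rewrite mulrBr.
Qed.

Lemma dotp_shift (R : realType) (I : nat) (q v : 'I_I -> R) (t : R) :
  dotp (fun i => t + q i) v = t * vsum v + dotp q v.
Proof.
rewrite /vsum /dotp mulr_sumr -big_split; apply: eq_bigr => i _ /=.
by rewrite mulrDl mul1r.
Qed.

Lemma dotp_gt0 (R : realType) (I : nat) (th v : 'I_I -> R) :
  (forall i, 0 < th i) -> (forall i, 0 <= v i) -> (exists i, v i != 0) ->
  0 < dotp th v.
Proof.
move=> th_gt0 v_ge0 [i vi_neq0].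
have thv_ge0 k : 0 <= th k * v k by exact: mulr_ge0 (ltW (th_gt0 k)) (v_ge0 k).
rewrite lt0r sumr_ge0 ?andbT // psumr_neq0 //.
by apply/hasP; exists i; rewrite ?mem_index_enum // mulr_gt0 // lt0r vi_neq0 v_ge0.
Qed.

Lemma dotp_pos_multiple (R : realType) (I : nat) (th u v : 'I_I -> R) :
  pos_multiple u v -> vsum v != 0 -> dotp th u = vsum u / vsum v * dotp th v.
Proof. by move=> [c [_ ->]] sv_neq0; rewrite /vsum !dotpZ mulfK. Qed.

Lemma pos_multiple_vsum (R : realType) (I : nat) (u v : 'I_I -> R) :
  0 < vsum u -> 0 < vsum v -> (forall i, vsum v * u i = vsum u * v i) ->
  pos_multiple u v.
Proof.
move=> su_gt0 sv_gt0 uv; exists (vsum u / vsum v); split; first by rewrite divr_gt0.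
apply: functional_extensionality => i.
by rewrite mulrAC -uv [_ * u i]mulrC mulfK // gt_eqF.
Qed.

(* The t at which (t.1 + q).v vanishes. *)
Definition line_root (R : realType) (I : nat) (q v : 'I_I -> R) : R :=
  - dotp q v / vsum v.

Lemma line_root_pos_multiple (R : realType) (I : nat) (q u v : 'I_I -> R) :
  pos_multiple u v -> line_root q u = line_root q v.
Proof.
move=> [c [c_gt0 ->]]; rewrite /line_root /vsum !dotpZ -mulrN -mulf_div.
by rewrite divff ?mul1r // gt_eqF.
Qed.

Lemma line_root_neq (R : realType) (I : nat) (q u v : 'I_I -> R) :
  0 < vsum u -> 0 < vsum v ->
  dotp q (fun i => vsum v * u i - vsum u * v i) != 0 ->
  line_root q u != line_root q v.
Proof.
move=> su_gt0 sv_gt0; apply: contra_neq; rewrite dotp_lincomb /line_root.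
move=> /eqP; rewrite eqr_div ?(gt_eqF su_gt0) ?(gt_eqF sv_gt0) // !mulNr.
move=> /eqP /oppr_inj uv.
by rewrite mulrC uv mulrC subrr.
Qed.

Definition poly_of_vec (R : nzRingType) (I : nat) (w : 'I_I -> R) : {poly R} :=
  \sum_(i < I) w i *: 'X^i.

Lemma coef_poly_of_vec (R : nzRingType) (I : nat) (w : 'I_I -> R) (i : 'I_I) :
  (poly_of_vec w)`_i = w i.
Proof.
rewrite /poly_of_vec coef_sum (bigD1 i) //= coefZ coefXn eqxx mulr1 big1 ?addr0 //.
by move=> k k_neq_i; rewrite coefZ coefXn eq_sym val_eqE (negbTE k_neq_i) mulr0.
Qed.

Lemma poly_of_vec_neq0 (R : nzRingType) (I : nat) (w : 'I_I -> R) :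
  (exists i, w i != 0) -> poly_of_vec w != 0.
Proof.
by move=> [i]; apply: contraNneq => w0; rewrite -coef_poly_of_vec w0 coef0.
Qed.

Lemma horner_poly_of_vec (R : comNzRingType) (I : nat) (w : 'I_I -> R) (z : R) :
  (poly_of_vec w).[z] = \sum_(i < I) w i * z ^+ i.
Proof.
by rewrite /poly_of_vec horner_sum; apply: eq_bigr => i _; rewrite hornerZ hornerXn.
Qed.

Lemma exists_nonneg_dotp_neq0 (R : realType) (I : nat) (T : finType)
    (A : {pred T}) (w : T -> 'I_I -> R) :
  (forall j, j \in A -> exists i, w j i != 0) ->
  exists2 q : 'I_I -> R,
    (forall i, 0 <= q i) & forall j, j \in A -> dotp q (w j) != 0.
Proof.
move=> w_neq0; pose Q := \prod_(j in A) poly_of_vec (w j).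
have /exists_posnat_nonroot [n] : Q != 0.
  by apply/prodf_neq0 => j /w_neq0; apply: poly_of_vec_neq0.
rewrite /root horner_prod => /prodf_neq0 Q_nonroot.
exists (fun i => n.+1%:R ^+ i) => [i|j /Q_nonroot]; first by rewrite exprn_ge0.
by rewrite horner_poly_of_vec /dotp; under eq_bigr do rewrite mulrC.
Qed.

Section PoissonRates.

Variables (R : realType) (I J : nat) (a : 'I_J -> 'I_I -> R).
Hypothesis a_ge0 : forall j i, 0 <= a j i.
Hypothesis a_neq0 : forall j, exists i, a j i != 0.

Definition rate_prod (th : 'I_I -> R) (n : 'I_J -> nat) : R :=
  \prod_j dotp th (a j) ^+ n j.

Definition cross_invariant (x y : 'I_J -> nat) : Prop :=
  forall th th' : 'I_I -> R, (forall i, 0 < th i) -> (forall i, 0 < th' i) ->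
    rate_prod th x * rate_prod th' y = rate_prod th' x * rate_prod th y.

Lemma rate_gt0 th j : (forall i, 0 < th i) -> 0 < dotp th (a j).
Proof. by move=> th_gt0; apply: dotp_gt0. Qed.

Lemma vsum_gt0 j : 0 < vsum (a j).
Proof. by apply: rate_gt0 => i; apply: ltr01. Qed.

Lemma rate_prod_neq0 th n : (forall i, 0 < th i) -> rate_prod th n != 0.
Proof.
by move=> th_gt0; apply/prodf_neq0 => j _; rewrite expf_neq0 // gt_eqF ?rate_gt0.
Qed.

Lemma pmfE th n :
  pmf a th n = rate_prod th n * \prod_j expR (- dotp th (a j)) / \prod_j (n j)`!%:R.
Proof. by rewrite /pmf /rate_prod -prodfV -!big_split. Qed.

Lemma pmf_ratio_eq th th' x y :
  (forall i, 0 < th i) -> (forall i, 0 < th' i) ->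
  pmf a th x / pmf a th y = pmf a th' x / pmf a th' y <->
  rate_prod th x * rate_prod th' y = rate_prod th' x * rate_prod th y.
Proof.
move=> th_gt0 th'_gt0.
have fact_neq0 (n : 'I_J -> nat) : \prod_j (n j)`!%:R != 0 :> R.
  by apply/prodf_neq0 => j _; rewrite pnatr_eq0 -lt0n fact_gt0.
have ratioE t : (forall i, 0 < t i) -> pmf a t x / pmf a t y =
    rate_prod t x / rate_prod t y * (\prod_j (y j)`!%:R / \prod_j (x j)`!%:R).
  move=> t_gt0; have exp_neq0 : \prod_j expR (- dotp t (a j)) != 0.
    by apply/prodf_neq0 => j _; rewrite gt_eqF ?expR_gt0.
  by rewrite !pmfE; field; rewrite ?fact_neq0 ?exp_neq0 ?rate_prod_neq0.
rewrite !ratioE //; split => [/(mulIf _) eq_ratio | eq_cross].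
- apply/eqP; rewrite -eqr_div ?rate_prod_neq0 //; apply/eqP/eq_ratio.
  by rewrite mulf_neq0 ?invr_eq0 ?fact_neq0.
- by congr (_ * _); apply/eqP; rewrite eqr_div ?rate_prod_neq0 //; apply/eqP.
Qed.

Lemma pmf_ratio_invariant x y :
  (forall th th' : 'I_I -> R, (forall i, 0 < th i) -> (forall i, 0 < th' i) ->
     pmf a th x / pmf a th y = pmf a th' x / pmf a th' y) <->
  cross_invariant x y.
Proof.
split=> inv th th' th_gt0 th'_gt0; apply/pmf_ratio_eq => //; exact: inv.
Qed.

Lemma rate_prod_block th (B : {set 'I_J}) j0 n :
  (forall j, j \in B -> pos_multiple (a j) (a j0)) ->
  \prod_(j in B) dotp th (a j) ^+ n j =
  (\prod_(j in B) (vsum (a j) / vsum (a j0)) ^+ n j) *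
    dotp th (a j0) ^+ collapsed_count n B.
Proof.
move=> B_mult; rewrite /collapsed_count -prodrXr -big_split /=.
apply: eq_bigr => j jB.
by rewrite (dotp_pos_multiple _ (B_mult j jB)) ?gt_eqF ?vsum_gt0 // exprMn.
Qed.

Lemma collapsing_cross_invariant P x y : collapsing a P ->
  (forall B, B \in P -> collapsed_count x B = collapsed_count y B) ->
  cross_invariant x y.
Proof.
move=> [/and3P [/eqP cover_P triv_P set0_notin_P] P_mult] xy th th' _ _.
have rate_prod_blocks t n :
    rate_prod t n = \prod_(B in P) \prod_(j in B) dotp t (a j) ^+ n j.
  by rewrite -big_trivIset // cover_P; apply: eq_bigl => j; rewrite inE.
rewrite !rate_prod_blocks -!big_split /=; apply: eq_bigr => B BP.
have [B0 | [j0 j0B]] := set_0Vmem B; first by rewrite -B0 BP in set0_notin_P.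
have B_mult j : j \in B -> pos_multiple (a j) (a j0).
  by move=> jB; exact: P_mult B BP j j0 jB j0B.
by rewrite !(rate_prod_block _ _ B_mult) (xy B BP); ring.
Qed.

Lemma maximal_collapsing_memP P B j0 j :
  maximal_collapsing a P -> B \in P -> j0 \in B ->
  j \in B <-> pos_multiple (a j) (a j0).
Proof.
move=> [[/and3P [/eqP cover_P _ _] P_mult] P_max] BP j0B.
split=> [jB | j_j0]; first exact: P_mult B BP j j0 jB j0B.
have /bigcupP [B' B'P jB'] : j \in cover P by rewrite cover_P inE.
have [<- // | B'_neq_B] := eqVneq B' B.
by case: (P_max B' B B'P BP B'_neq_B j j0 jB' j0B j_j0).
Qed.

Lemma horner_prod_XsubC_line_root q t n :
  (\prod_j ('X - (line_root q (a j))%:P) ^+ n j).[t] * rate_prod (fun=> 1) n =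
  rate_prod (fun i => t + q i) n.
Proof.
rewrite horner_prod /rate_prod -big_split; apply: eq_bigr => j _ /=.
rewrite horner_exp hornerXsubC -exprMn dotp_shift /line_root -/(vsum (a j)).
by congr (_ ^+ _); field; rewrite gt_eqF ?vsum_gt0.
Qed.

Lemma cross_invariant_collapsed_count P x y :
  maximal_collapsing a P -> cross_invariant x y ->
  forall B, B \in P -> collapsed_count x B = collapsed_count y B.
Proof.
move=> P_max xy B BP.
have [B0 | [j0 j0B]] := set_0Vmem B.
  case: P_max => [[/and3P [_ _ set0_notin_P] _] _].
  by rewrite -B0 BP in set0_notin_P.
(* w j = 0 iff a j is a positive multiple of a j0, i.e. iff j \in B. *)
pose w j i := vsum (a j0) * a j i - vsum (a j) * a j0 i.
have [q q_ge0 q_sep] : exists2 q : 'I_I -> R, (forall i, 0 <= q i) &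
    forall j, j \in [predC B] -> dotp q (w j) != 0.
  apply: exists_nonneg_dotp_neq0 => j; rewrite inE => jNB.
  apply/existsP; apply: contraNT jNB; rewrite negb_exists => /forallP w0.
  apply/(maximal_collapsing_memP _ P_max BP j0B).
  apply: pos_multiple_vsum; rewrite ?vsum_gt0 // => i.
  by apply/eqP; rewrite -subr_eq0; apply/negPn/w0.
pose r j := line_root q (a j).
have r_eq j : (r j == r j0) = (j \in B).
  have [jB | jNB] := boolP (j \in B).
    by apply/eqP/line_root_pos_multiple/(maximal_collapsing_memP _ P_max BP j0B).
  by apply/negbTE/line_root_neq; rewrite ?vsum_gt0 // q_sep ?inE.
have M_eq : \prod_j ('X - (r j)%:P) ^+ x j = \prod_j ('X - (r j)%:P) ^+ y j.
  apply: poly_eq_on_posnat => n.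
  have one_gt0 (i : 'I_I) : 0 < (fun=> 1 : R) i by exact: ltr01.
  have shift_gt0 i : 0 < n.+1%:R + q i by rewrite ltr_wpDr ?q_ge0 ?ltr0Sn.
  apply: (mulIf (rate_prod_neq0 x one_gt0)).
  apply: (mulIf (rate_prod_neq0 y one_gt0)).
  rewrite [RHS]mulrAC !horner_prod_XsubC_line_root.
  by rewrite (xy _ _ shift_gt0 one_gt0) mulrC.
have count_mup n :
    collapsed_count n B = mup (r j0) (\prod_j ('X - (r j)%:P) ^+ n j).
  rewrite mup_prod_XsubCX /collapsed_count big_mkcond.
  by apply: eq_bigr => j _; rewrite r_eq.
by rewrite !count_mup M_eq.
Qed.

End PoissonRates.

Theorem theorem1 (R : realType) (I J : nat) (hI : (0 < I)%N) (hJ : (0 < J)%N)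
    (a : 'I_J -> 'I_I -> R)
    (ha_nneg : forall j i, 0 <= a j i)
    (ha_nz : forall j, exists i, a j i != 0)
    (P : {set {set 'I_J}}) (hP : maximal_collapsing a P) :
  forall x y : 'I_J -> nat,
    (forall th th' : 'I_I -> R, (forall i, 0 < th i) -> (forall i, 0 < th' i) ->
        pmf a th x / pmf a th y = pmf a th' x / pmf a th' y)
    <-> (forall B, B \in P -> collapsed_count x B = collapsed_count y B).
Proof.
move=> x y; rewrite pmf_ratio_invariant //; split.
- exact: cross_invariant_collapsed_count.
- exact: collapsing_cross_invariant hP.1.
Qed.
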